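(* Let $\odot$ be a non-degenerate pseudo-multiplication and let $\phi$ be the supremum of the set of $\odot$-finite elements of $[0,\infty]$. Let $\tau$ be a $\sigma$-maxitive measure on a $\sigma$-algebra $\mathcal{B}$ on a nonempty set $E$ having the Radon–Nikodym property with respect to the idempotent $\odot$-integral. Then $\tau(E)\le\phi$.
   Context: Write $\overline{\mathbb{R}}_+=[0,\infty]$. A pseudo-multiplication is a binary operation $\odot$ on $\overline{\mathbb{R}}_+$ with the following properties: - it is associative; - it is continuous on $(0,\infty)\times[0,\infty]$; - for every $t$, the map $s\mapsto s\odot t$ is continuous on $(0,\infty]$; - it is nondecreasing in each argument; - it has a left identity $1_\odot$, i.e. $1_\odot\odot t=t$ for all $t$; - it has no zero divisors, i.e. $s\odot t=0$ implies $s=0$ or $t=0$; - $0\odot t=t\odot 0=0$ for all $t$. Put $O(t)=\inf_{s>0}s\odot t$. An element $t$ is $\odot$-finite if $O(t)=0$, and $\odot$-infinite otherwise. The operation $\odot$ is non-degenerate if $1_\odot$ is $\odot$-finite. A $\sigma$-maxitive measure on $\mathcal{B}$ is a map $\nu:\mathcal{B}\to\overline{\mathbb{R}}_+$ with $\nu(\emptyset)=0$ and $\nu(\bigcup_j B_j)=\sup_j\nu(B_j)$ for every countable family. A map $f:E\to\overline{\mathbb{R}}_+$ is $\mathcal{B}$-measurable if $\{f>t\}\in\mathcal{B}$ for all $t\in[0,\infty)$. The idempotent $\odot$-integral is $\int^\infty_B f\odot d\tau=\sup_{t\in[0,\infty)}t\odot\tau(B\cap\{f>t\})$. $\nu\ll_\odot\tau$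 means $\nu(B)\le\infty\odot\tau(B)$ for every $B\in\mathcal{B}$ with $\tau(B)$ $\odot$-finite. $\tau$ has the Radon–Nikodym property if every $\sigma$-maxitive $\nu\ll_\odot\tau$ admits a $\mathcal{B}$-measurable $c:E\to\overline{\mathbb{R}}_+$ with $\nu(B)=\int^\infty_B c\odot d\tau$ for all $B\in\mathcal{B}$. *)

From Stdlib Require Import Reals.
Open Scope R_scope.

Inductive ERp : Type :=
| PFin (r : R) (H : 0 <= r)
| PInf.

Definition ERp_le (x y : ERp) : Prop :=
  match x, y with
  | PFin a _, PFin b _ => a <= b
  | _, PInf => True
  | PInf, PFin _ _ => False
  end.

Definition ERp_lt (x y : ERp) : Prop := ERp_le x y /\ x <> y.

Definition ERp0 : ERp := PFin 0 (Rle_refl 0).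

Definition pos_fin (x : ERp) : Prop :=
  match x with PFin r _ => 0 < r | PInf => False end.

Definition pos (x : ERp) : Prop :=
  match x with PFin r _ => 0 < r | PInf => True end.

Definition is_sup (A : ERp -> Prop) (s : ERp) : Prop :=
  (forall a, A a -> ERp_le a s) /\
  (forall u, (forall a, A a -> ERp_le a u) -> ERp_le s u).

Definition is_inf (A : ERp -> Prop) (s : ERp) : Prop :=
  (forall a, A a -> ERp_le s a) /\
  (forall u, (forall a, A a -> ERp_le u a) -> ERp_le u s).

Definition nbhd (x : ERp) (P : ERp -> Prop) : Prop :=
  match x with
  | PFin r _ => exists e, 0 < e /\
      forall y, (match y with PFin b _ => Rabs (b - r) < e | PInf => False end) -> P y
  | PInf => exists M : R,
      forall y, (match y with PFin b _ => M < b | PInf => True end) -> P y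
  end.

Definition cont_at_on (D : ERp -> Prop) (f : ERp -> ERp) (x : ERp) : Prop :=
  forall V, nbhd (f x) V ->
    exists U, nbhd x U /\ forall y, D y -> U y -> V (f y).

Definition cont2_at_on (D : ERp -> ERp -> Prop) (op : ERp -> ERp -> ERp)
    (s t : ERp) : Prop :=
  forall V, nbhd (op s t) V ->
    exists U1 U2, nbhd s U1 /\ nbhd t U2 /\
      forall s' t', D s' t' -> U1 s' -> U2 t' -> V (op s' t').

Definition is_pseudo_mult (op : ERp -> ERp -> ERp) (one : ERp) : Prop :=
  (forall a b c, op (op a b) c = op a (op b c)) /\
  (forall s t, pos_fin s -> cont2_at_on (fun s' _ => pos_fin s') op s t) /\
  (forall t s, pos s -> cont_at_on pos (fun s' => op s' t) s) /\
  (forall s s' t, ERp_le s s' -> ERp_le (op s t) (op s' t)) /\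
  (forall s t t', ERp_le t t' -> ERp_le (op s t) (op s t')) /\
  (forall t, op one t = t) /\
  (forall s t, op s t = ERp0 -> s = ERp0 \/ t = ERp0) /\
  (forall t, op ERp0 t = ERp0 /\ op t ERp0 = ERp0).

Definition op_finite (op : ERp -> ERp -> ERp) (t : ERp) : Prop :=
  is_inf (fun u => exists s, pos s /\ u = op s t) ERp0.

Definition non_degenerate (op : ERp -> ERp -> ERp) (one : ERp) : Prop :=
  op_finite op one.

Definition sigma_algebra {E : Type} (B : (E -> Prop) -> Prop) : Prop :=
  B (fun _ => True) /\
  (forall A, B A -> B (fun x => ~ A x)) /\
  (forall An : nat -> E -> Prop, (forall n, B (An n)) ->
     B (fun x => exists n, An n x)).

Definition sigma_maxitive {E : Type} (B : (E -> Prop) -> Prop)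
    (nu : (E -> Prop) -> ERp) : Prop :=
  nu (fun _ => False) = ERp0 /\
  forall Bn : nat -> E -> Prop, (forall n, B (Bn n)) ->
    is_sup (fun u => exists n, u = nu (Bn n)) (nu (fun x => exists n, Bn n x)).

Definition measurable {E : Type} (B : (E -> Prop) -> Prop) (f : E -> ERp) : Prop :=
  forall (t : R) (Ht : 0 <= t), B (fun x => ERp_lt (PFin t Ht) (f x)).

Definition is_idem_integral {E : Type} (op : ERp -> ERp -> ERp)
    (tau : (E -> Prop) -> ERp) (A : E -> Prop) (f : E -> ERp) (v : ERp) : Prop :=
  is_sup (fun u => exists (t : R) (Ht : 0 <= t),
            u = op (PFin t Ht) (tau (fun x => A x /\ ERp_lt (PFin t Ht) (f x)))) v.

Definition op_abs_cont {E : Type} (op : ERp -> ERp -> ERp) (B : (E -> Prop) -> Prop)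
    (nu tau : (E -> Prop) -> ERp) : Prop :=
  forall A, B A -> op_finite op (tau A) -> ERp_le (nu A) (op PInf (tau A)).

Definition radon_nikodym_property {E : Type} (op : ERp -> ERp -> ERp)
    (B : (E -> Prop) -> Prop) (tau : (E -> Prop) -> ERp) : Prop :=
  forall nu, sigma_maxitive B nu -> op_abs_cont op B nu tau ->
    exists c : E -> ERp, measurable B c /\
      forall A, B A -> is_idem_integral op tau A c (nu A).

From Pilot Require Import Defs.
From Stdlib Require Import Reals.
From Stdlib Require Import Classical ClassicalDescription ProofIrrelevance
  FunctionalExtensionality PropExtensionality Lia Lra.

(** Let φ be the supremum of the ⊙-finite elements and suppose τ(E) > φ.
    The test measure ν(A) = 0 if τ(A) ≤ φ and ν(A) = 1_⊙ otherwise is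
    σ-maxitive and ⊙-absolutely continuous w.r.t. τ (a ⊙-finite τ(A) is ≤ φ),
    so it has a density c.  Cover E by the countably many level sets
    {c = 0} and {c > 1/(n+1)}; by σ-maxitivity one of them, L, has τ(L) > φ,
    hence ν(L) = 1_⊙.
    - If L = {c = 0}, the idempotent integral of c over L is 0, so 1_⊙ = 0,
      and then τ(E) = 1_⊙ ⊙ τ(E) = 0 ≤ φ anyway.
    - If L = {c > t} with t > 0, then t ⊙ τ(L) ≤ ν(L) = 1_⊙; since 1_⊙ is
      ⊙-finite this forces τ(L) to be ⊙-finite, hence τ(L) ≤ φ. *)

Lemma le0 x : ERp_le ERp0 x.
Proof. destruct x; simpl; auto. Qed.

Lemma le_refl x : ERp_le x x.
Proof. destruct x; simpl; auto; apply Rle_refl. Qed.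

Lemma le_trans x y z : ERp_le x y -> ERp_le y z -> ERp_le x z.
Proof. destruct x, y, z; simpl; auto; try tauto. apply Rle_trans. Qed.

Lemma PFin_0 r (H : 0 <= r) : r = 0 -> PFin r H = ERp0.
Proof. intros ->. unfold ERp0. f_equal. apply proof_irrelevance. Qed.

Lemma le_0_eq x : ERp_le x ERp0 -> x = ERp0.
Proof. destruct x; simpl; try tauto. intros; apply PFin_0; lra. Qed.

Lemma pos_iff_neq0 x : Defs.pos x <-> x <> ERp0.
Proof.
  destruct x as [r Hr|]; simpl; split; intros H.
  - intro Heq; injection Heq; lra.
  - destruct Hr as [Hr|Hr]; auto. subst. exfalso; apply H, PFin_0; auto.
  - discriminate.
  - auto.
Qed.

Lemma gt_PFin_pos t Ht y : ERp_lt (PFin t Ht) y -> Defs.pos y.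
Proof.
  destruct y; simpl; auto. intros [[Hlt|Heq] Hneq]; [lra|subst].
  exfalso; apply Hneq; f_equal; apply proof_irrelevance.
Qed.

Lemma sup_not_le (S : ERp -> Prop) s u :
  is_sup S s -> ~ ERp_le s u -> exists a, S a /\ ~ ERp_le a u.
Proof.
  intros [_ Hleast] Hsu. apply NNPP; intro Hnone.
  apply Hsu, Hleast. intros a Ha.
  apply NNPP; intro Hau; apply Hnone; eauto.
Qed.

Lemma set_ext {E} (P Q : E -> Prop) : (forall x, P x <-> Q x) -> P = Q.
Proof.
  intros H; apply functional_extensionality; intro.
  apply propositional_extensionality; auto.
Qed.

Section FiniteTransfer.

Variable op : ERp -> ERp -> ERp.
Hypothesis op_assoc : forall a b c, op (op a b) c = op a (op b c).
Hypothesis op_mono_r : forall s t t', ERp_le t t' -> ERp_le (op s t) (op s t').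
Hypothesis op_no_zero_div : forall s t, op s t = ERp0 -> s = ERp0 \/ t = ERp0.

(** ⊙-finiteness passes down: if [t ⊙ b ≤ a] with [t ≠ 0] and [a] ⊙-finite,
    then [b] is ⊙-finite, since [s ⊙ a ≥ (s ⊙ t) ⊙ b] and [s ⊙ t > 0]. *)
Lemma op_finite_of_bounded_multiple a b t :
  op_finite op a -> t <> ERp0 -> ERp_le (op t b) a -> op_finite op b.
Proof.
  intros Ha Ht Hle. split; [intros; apply le0|]. intros u Hu.
  apply (proj2 Ha). intros w [s [Hs ->]].
  apply le_trans with (op s (op t b)); [|apply op_mono_r, Hle].
  rewrite <- op_assoc. apply Hu. exists (op s t); split; auto.
  apply pos_iff_neq0. intros Hst.
  destruct (op_no_zero_div _ _ Hst); [apply pos_iff_neq0 in Hs|]; auto.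
Qed.

End FiniteTransfer.

Section TestMeasure.

Context {E : Type} (tau : (E -> Prop) -> ERp).
Variables (phi v : ERp).

Definition excess_measure (A : E -> Prop) : ERp :=
  if excluded_middle_informative (ERp_le (tau A) phi) then ERp0 else v.

Lemma excess_measure_small A : ERp_le (tau A) phi -> excess_measure A = ERp0.
Proof. intros; unfold excess_measure; destruct excluded_middle_informative; tauto. Qed.

Lemma excess_measure_large A : ~ ERp_le (tau A) phi -> excess_measure A = v.
Proof. intros; unfold excess_measure; destruct excluded_middle_informative; tauto. Qed.

Lemma excess_measure_le A : ERp_le (excess_measure A) v.
Proof. unfold excess_measure; destruct excluded_middle_informative; auto using le0, le_refl. Qed.

(** A countable union is large iff one of its members is, hence σ-maxitivity
    of [τ] is inherited. *)
Lemma excess_measure_sigma_maxitive (B : (E -> Prop) -> Prop) :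
  sigma_maxitive B tau -> sigma_maxitive B excess_measure.
Proof.
  intros [Htau0 Htau_sup]. split.
  { apply excess_measure_small. rewrite Htau0. apply le0. }
  intros Bn HBn. destruct (Htau_sup Bn HBn) as [Hub Hleast].
  destruct (classic (ERp_le (tau (fun x => exists n, Bn n x)) phi)) as [Hsmall|Hlarge].
  - rewrite excess_measure_small by auto. split; [|intros; apply le0].
    intros a [n ->]. rewrite excess_measure_small; [apply le_refl|].
    eapply le_trans; [apply Hub; eauto|auto].
  - rewrite excess_measure_large by auto. split.
    + intros a [n ->]. apply excess_measure_le.
    + intros u Hu.
      destruct (sup_not_le _ _ _ (conj Hub Hleast) Hlarge) as [a [[n ->] Hn]].
      rewrite <- (excess_measure_large _ Hn). apply Hu; eauto.
Qed.

Lemma excess_measure_abs_cont (B : (E -> Prop) -> Prop) op :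
  (forall b, op_finite op b -> ERp_le b phi) ->
  op_abs_cont op B excess_measure tau.
Proof.
  intros Hphi A _ Hfin. rewrite excess_measure_small by auto. apply le0.
Qed.

End TestMeasure.

Section LevelSets.

Context {E : Type} (c : E -> ERp).

Lemma inv_succ_pos n : 0 < / INR (S n).
Proof. apply Rinv_0_lt_compat, lt_0_INR; lia. Qed.

Definition inv_succ (n : nat) : ERp := PFin (/ INR (S n)) (Rlt_le _ _ (inv_succ_pos n)).

(** Level set [0] is [{c = 0}], level set [n+1] is [{c > 1/(n+1)}]. *)
Definition level_set (n : nat) : E -> Prop :=
  match n with
  | O => fun x => ~ ERp_lt ERp0 (c x)
  | S m => fun x => ERp_lt (inv_succ m) (c x)
  end.

Lemma level_set_measurable B :
  sigma_algebra B -> measurable B c -> forall n, B (level_set n).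
Proof.
  intros (_ & Hcompl & _) Hc [|n]; simpl.
  - exact (Hcompl _ (Hc 0 (Rle_refl 0))).
  - apply Hc.
Qed.

(** By the Archimedean property the level sets cover [E]. *)
Lemma level_sets_cover x : exists n, level_set n x.
Proof.
  destruct (classic (ERp_lt ERp0 (c x))) as [Hx|Hx]; [|exists O; exact Hx].
  apply gt_PFin_pos in Hx.
  destruct (c x) as [r Hr|] eqn:Hcx.
  - destruct (archimed_cor1 r Hx) as [[|N] [HN1 HN2]]; [lia|].
    exists (S N). cbv beta iota delta [level_set]; rewrite Hcx. split; [left; exact HN1|].
    intro Heq. assert (Hval : / INR (S N) = r) by (injection Heq as Hval; exact Hval). lra.
  - exists 1%nat. cbv beta iota delta [level_set]; rewrite Hcx. split; [exact I|discriminate].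
Qed.

End LevelSets.

Section IdemIntegral.

Context {E : Type} (op : ERp -> ERp -> ERp) (tau : (E -> Prop) -> ERp).

(** The idempotent integral of a density vanishing on [A] is [0]:
    each set [A ∩ {c > t}] is empty. *)
Lemma idem_integral_null A c w :
  (forall s, op s ERp0 = ERp0) -> tau (fun _ => False) = ERp0 ->
  (forall x, A x -> ~ ERp_lt ERp0 (c x)) ->
  is_idem_integral op tau A c w -> w = ERp0.
Proof.
  intros Hop0 Htau0 Hnull [_ Hleast]. apply le_0_eq, Hleast.
  intros a [t [Ht ->]].
  replace (fun x => A x /\ ERp_lt (PFin t Ht) (c x)) with (fun _ : E => False).
  - rewrite Htau0, Hop0. apply le_refl.
  - apply set_ext; intro x; split; [tauto|]. intros [HAx Hcx].
    apply (Hnull x HAx). split; [apply le0|].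
    intros H0. apply (proj1 (pos_iff_neq0 _) (gt_PFin_pos _ _ _ Hcx)). now symmetry.
Qed.

Lemma idem_integral_lower A c t Ht w :
  (forall x, A x -> ERp_lt (PFin t Ht) (c x)) ->
  is_idem_integral op tau A c w -> ERp_le (op (PFin t Ht) (tau A)) w.
Proof.
  intros HA [Hub _].
  replace (tau A) with (tau (fun x => A x /\ ERp_lt (PFin t Ht) (c x))).
  - apply Hub. eauto.
  - f_equal. apply set_ext; intro x; split; [tauto|auto].
Qed.

End IdemIntegral.

Theorem mainTheorem8 (op : ERp -> ERp -> ERp) (one : ERp)
  (Hop : is_pseudo_mult op one) (Hnd : non_degenerate op one)
  (phi : ERp) (Hphi : is_sup (op_finite op) phi)
  (E : Type) (HE : inhabited E) (B : (E -> Prop) -> Prop)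
  (HB : sigma_algebra B) (tau : (E -> Prop) -> ERp)
  (Htau : sigma_maxitive B tau)
  (HRN : radon_nikodym_property op B tau) :
  ERp_le (tau (fun _ => True)) phi.
Proof.
  destruct Hop as (Hassoc & _ & _ & _ & Hmono & Hone & Hzd & Hzero).
  destruct (classic (one = ERp0)) as [Hone0|Hone0].
  { rewrite <- (Hone (tau _)), Hone0, (proj1 (Hzero _)). apply le0. }
  apply NNPP; intros Hlarge.
  destruct (HRN (excess_measure tau phi one)) as [c [Hc Hdensity]].
  { apply excess_measure_sigma_maxitive, Htau. }
  { apply excess_measure_abs_cont, (proj1 Hphi). }
  (* some level set L of the density c has τ(L) > φ, hence ν(L) = 1_⊙ *)
  assert (Hcover : (fun _ : E => True) = (fun x => exists n, level_set c n x)).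
  { apply set_ext; intro x; split; [intros _; apply level_sets_cover|auto]. }
  pose proof (level_set_measurable c B HB Hc) as HL.
  pose proof (proj2 Htau _ HL) as Hsup. rewrite <- Hcover in Hsup.
  destruct (sup_not_le _ _ _ Hsup Hlarge) as [a [[n ->] Hn]].
  pose proof (Hdensity _ (HL n)) as Hintegral.
  rewrite (excess_measure_large tau phi one _ Hn) in Hintegral.
  destruct n as [|n].
  - (* on {c = 0} the integral vanishes, contradicting 1_⊙ <> 0 *)
    apply Hone0, (idem_integral_null op tau (level_set c 0) c one
      (fun s => proj2 (Hzero s)) (proj1 Htau) (fun x Hx => Hx) Hintegral).
  - (* on {c > 1/(n+1)}, (1/(n+1)) ⊙ τ(L) <= 1_⊙ makes τ(L) ⊙-finite *)
    apply Hn, (proj1 Hphi).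
    apply (op_finite_of_bounded_multiple op Hassoc Hmono Hzd one _ (inv_succ n) Hnd).
    + apply pos_iff_neq0, inv_succ_pos.
    + exact (idem_integral_lower op tau _ c _ _ _ (fun x Hx => Hx) Hintegral).
Qed.
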